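(* Fix a constant $c\ge 10$. Consider the random pairwise load balancing process on $n\ge2$ nodes with arbitrary initial load vector, and let $T_2$ be the first time $t\ge T_1$ with $\max_i\ell_i(t)\le\varnothing+2c$ and $\min_i\ell_i(t)\ge\varnothing-2c$. Let $T_3$ be the first time $t\ge T_2$ such that $\max_{1\le i\le n}\ell_i(t)\le \mathrm{round}(\varnothing)+1$ and $\min_{1\le i\le n}\ell_i(t)\ge\mathrm{round}(\varnothing)-1$. Then with high probability (probability $1-O(1/n)$), $T_3=T_2+O(n\log n)$, where the constant in $O(\cdot)$ depends only on $c$.
   Context: Random pairwise load balancing process: $n$ nodes, $m$ tokens, load vector $\ell(t)\in\mathbb{Z}^n$. In each time step $t$, independently, an ordered pair $(u,v)$ of distinct nodes is chosen uniformly at random and loads become $\ell_u(t+1)=\lceil(\ell_u(t)+\ell_v(t))/2\rceil$, $\ell_v(t+1)=\lfloor(\ell_u(t)+\ell_v(t))/2\rfloor$. Average load $\varnothing=m/n$; $\mathrm{round}(\varnothing)$ is $\varnothing$ rounded to the nearest integer; potential $\Phi(\ell)=\sum_i(\ell_i-\varnothing)^2$; $T_1$ is the first time $t$ with $\Phi(\ell(t))<n$. *)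

From HB Require Import structures.
From mathcomp Require Import all_boot all_order all_algebra.
Set Implicit Arguments. Unset Strict Implicit. Unset Printing Implicit Defensive.
Import Order.TTheory GRing.Theory Num.Theory.
Local Open Scope ring_scope.

Definition loadv (n : nat) := 'I_n -> int.

Definition pairn (n : nat) := ('I_n * 'I_n)%type.

(* One balancing step on the ordered pair (u,v):
   l_u <- ceil((l_u+l_v)/2), l_v <- floor((l_u+l_v)/2).
   (%/ on int is floor division for positive divisor.) *)
Definition step n (l : loadv n) (p : pairn n) : loadv n :=
  fun i => if i == p.1 then ((l p.1 + l p.2 + 1) %/ 2)%Z
           else if i == p.2 then ((l p.1 + l p.2) %/ 2)%Z
           else l i.

Definition traj n (l0 : loadv n) (s : seq (pairn n)) (t : nat) : loadv n :=
  foldl (@step n) l0 (take t s).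

Definition avg (R : numFieldType) n (l : loadv n) : R :=
  (\sum_(i < n) l i)%:~R / n%:R.

Definition Phi (R : numFieldType) n (l : loadv n) : R :=
  \sum_(i < n) ((l i)%:~R - avg R l) ^+ 2.

(* round(x): nearest integer, ties rounded up. *)
Definition roundR (R : archiRealFieldType) (x : R) : int := Num.floor (x + 2^-1).

Definition cond1 (R : numFieldType) n (l : loadv n) : bool := Phi R l < n%:R.
Definition cond2 (R : numFieldType) (c : R) n (l : loadv n) : bool :=
  [forall i, ((l i)%:~R <= avg R l + 2 * c) && (avg R l - 2 * c <= (l i)%:~R)].
Definition cond3 (R : archiRealFieldType) n (l : loadv n) : bool :=
  [forall i, (l i <= roundR (avg R l) + 1) && (roundR (avg R l) - 1 <= l i)].

Definition first_from (P : nat -> bool) (a t : nat) : bool :=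
  [&& a <= t, P t & [forall j : 'I_t, (a <= j) ==> ~~ P j]]%N.

Definition isT1 (R : numFieldType) n (l0 : loadv n) s (t : nat) : bool :=
  first_from (fun u => cond1 R (traj l0 s u)) 0 t.
Definition isT2 (R : numFieldType) (c : R) n (l0 : loadv n) s (t2 : nat) : bool :=
  [exists t1 : 'I_t2.+1, isT1 R l0 s t1 &&
     first_from (fun u => cond2 c (traj l0 s u)) t1 t2].

(* Bad event on a prefix of length N + D of the random sequence:
   T2 <= N and T3 > T2 + D (no time in [T2, T2+D] satisfies cond3). *)
Definition bad (R : archiRealFieldType) (c : R) n (l0 : loadv n) (N D : nat)
  (s : seq (pairn n)) : bool :=
  [exists t2 : 'I_N.+1, isT2 c l0 s t2 &&
     [forall k : 'I_D.+1, ~~ cond3 R (traj l0 s (t2 + k))]].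

Definition valid n (s : seq (pairn n)) : bool := all (fun p => p.1 != p.2) s.

(* Probability of an event for L steps, each pair i.i.d. uniform among
   ordered pairs of distinct nodes: uniform counting measure on valid
   L-tuples. *)
Definition prob n (L : nat) (E : pred (seq (pairn n))) : rat :=
  #|[set s : L.-tuple (pairn n) | valid s && E s]|%:R /
  #|[set s : L.-tuple (pairn n) | valid s]|%:R.

(* Measure the imbalance by [Psi x = sum_i w(x_i - r)], where [r] is the
   rounded average (preserved by every step) and [w d = 4^|d|] for [|d| >= 2],
   [w d = 0] otherwise.  By convexity of [w] a step never increases [Psi].
   After [T2] every deviation is at most [M = O(c)], so at least a
   [1/(2(M+1))] fraction of the nodes lies on each side of [r]; pairing a node
   of deviation [|d| >= 2] with one on the other side removes at least half of
   its weight.  Hence one random step shrinks [E Psi] by a factor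
   [1 - 1/(4n(M+1))], and after [16(M+1) n log n] steps
   [E Psi <= n 4^M / n^2].  Since [Psi >= 1] whenever some load is at distance
   [>= 2] from [r], Markov's inequality bounds the failure probability by
   [4^M / n]; summing over the (unique) value of [T2] keeps this bound. *)

From HB Require Import structures.
From mathcomp Require Import all_boot all_order all_algebra.
From mathcomp Require Import zify ring lra.
Set Implicit Arguments. Unset Strict Implicit. Unset Printing Implicit Defensive.
Import Order.TTheory GRing.Theory Num.Theory.
Local Open Scope ring_scope.

Section TupleSum.
Variables (T : finType) (P : pred T).

Definition tsum (L : nat) (F : seq T -> rat) : rat :=
  \sum_(s : L.-tuple T | all P s) F s.

Definition nchoices : rat := \sum_(x | P x) 1.

Lemma nchoices_ge0 : 0 <= nchoices.
Proof. exact: sumr_ge0. Qed.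

Lemma tsum0 F : tsum 0 F = F [::].
Proof.
rewrite /tsum (big_pred1 [tuple]) //= => s.
by rewrite tuple0 /= [RHS]eqxx.
Qed.

Lemma tsumS L F : tsum L.+1 F = \sum_(x | P x) tsum L (fun s => F (x :: s)).
Proof.
rewrite /tsum pair_big_dep /=.
rewrite (reindex (fun u : T * L.-tuple T => [tuple of u.1 :: u.2])) /=.
  by apply: eq_bigl => -[x t].
exists (fun u : L.+1.-tuple T => (thead u, [tuple of behead u])) => /=.
  by move=> [x t] _ /=; congr pair; apply: val_inj.
by move=> u _; apply: val_inj => /=; case: u => -[|a s].
Qed.

Lemma eq_tsum L F G : (forall s, size s = L -> all P s -> F s = G s) ->
  tsum L F = tsum L G.
Proof. by move=> FG; apply: eq_bigr => s Ps; rewrite FG ?size_tuple. Qed.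

Lemma ler_tsum L F G : (forall s, size s = L -> all P s -> F s <= G s) ->
  tsum L F <= tsum L G.
Proof. by move=> FG; apply: ler_sum => s Ps; rewrite FG ?size_tuple. Qed.

Lemma tsumZ L a F : tsum L (fun s => a * F s) = a * tsum L F.
Proof. by rewrite /tsum mulr_sumr. Qed.

Lemma tsum_sum (I : finType) L (F : I -> seq T -> rat) :
  tsum L (fun s => \sum_i F i s) = \sum_i tsum L (F i).
Proof. by rewrite /tsum exchange_big. Qed.

Lemma tsum_cat a b F :
  tsum (a + b) F = tsum a (fun s1 => tsum b (fun s2 => F (s1 ++ s2))).
Proof.
elim: a F => [|a IH] F; first by rewrite tsum0.
by rewrite addSn !tsumS; apply: eq_bigr => x _; rewrite IH.
Qed.

Lemma tsum_const L k : tsum L (fun _ => k) = nchoices ^+ L * k.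
Proof.
elim: L k => [|L IH] k; first by rewrite tsum0 mul1r.
rewrite tsumS; under eq_bigr do rewrite IH.
by rewrite exprS -mulrA mulr_suml; apply: eq_bigr => *; rewrite mul1r.
Qed.

End TupleSum.

Definition wexp (m : nat) : nat := if (1 < m)%N then (4 ^ m)%N else 0%N.

Definition wt (d : int) : nat := wexp (absz d).

Lemma wexpS m : (4 * wexp m <= wexp m.+1)%N.
Proof. by rewrite /wexp; case: m => [|[|m]] //=; rewrite expnS. Qed.

Lemma leq_wexp m k : (m <= k)%N -> (wexp m <= wexp k)%N.
Proof.
move=> /subnKC <-; elim: (k - m)%N => [|t IH]; first by rewrite addn0.
by rewrite addnS (leq_trans IH) // (leq_trans _ (wexpS _)) ?leq_pmull.
Qed.

Lemma wexp_convex m : (2 * wexp m.+1 <= wexp m + wexp m.+2)%N.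
Proof. by rewrite /wexp; case: m => [|[|m]] //=; rewrite !expnS; lia. Qed.

Lemma wt_convex (k : int) : (2 * wt (k + 1) <= wt k + wt (k + 2))%N.
Proof.
rewrite /wt; have [k0|k0] := lerP 0 k.
  have -> : absz (k + 1) = (absz k).+1 by lia.
  have -> : absz (k + 2) = (absz k).+2 by lia.
  exact: wexp_convex.
have [->|k1] := eqVneq k (-1); first by [].
have -> : absz k = (absz (k + 2)).+2 by lia.
have -> : absz (k + 1) = (absz (k + 2)).+1 by lia.
by rewrite addnC wexp_convex.
Qed.

Lemma wt_incr_mono (x y : int) : x <= y ->
  (wt (x + 1))%:Z - (wt x)%:Z <= (wt (y + 1))%:Z - (wt y)%:Z.
Proof.
move=> xy; have [t ->] : exists t : nat, y = x + t%:Z by exists (absz (y - x)); lia.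
elim: t => [|t IH]; first by rewrite addr0.
apply: le_trans IH _; have := wt_convex (x + t%:Z).
have -> : x + t.+1%:Z = x + t%:Z + 1 by lia.
have -> : x + t%:Z + 1 + 1 = x + t%:Z + 2 by lia.
lia.
Qed.

(* By convexity of [wt]: bring both values one unit closer and recurse. *)
Lemma wt_avg (x y : int) :
  (wt ((x + y + 1) %/ 2)%Z + wt ((x + y) %/ 2)%Z <= wt x + wt y)%N.
Proof.
wlog xy : x y / x <= y.
  move=> W; have [xy|yx] := lerP x y; first exact: W.
  by have := W y x (ltW yx); rewrite (addrC y x) [(wt y + _)%N]addnC.
have [t -> {xy}] : exists t : nat, y = x + t%:Z by exists (absz (y - x)); lia.
elim/ltn_ind: t x => -[|[|t]] IH x.
- have -> : ((x + (x + 0%:Z) + 1) %/ 2)%Z = x by lia.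
  have -> : ((x + (x + 0%:Z)) %/ 2)%Z = x by lia.
  by rewrite addr0.
- have -> : ((x + (x + 1%:Z) + 1) %/ 2)%Z = x + 1 by lia.
  have -> : ((x + (x + 1%:Z)) %/ 2)%Z = x by lia.
  by rewrite addnC.
have -> : x + (x + t.+2%:Z) = (x + 1) + ((x + 1) + t%:Z) by lia.
apply: leq_trans (IH t _ (x + 1)) _; first lia.
have := @wt_incr_mono x (x + 1 + t%:Z) ltac:(lia).
have -> : x + 1 + t%:Z + 1 = x + t.+2%:Z by lia.
lia.
Qed.

(* When [x] and [y] lie on opposite sides of 0 and [|x| >= 2], both averages
   have absolute value below [max |x| |y|], which costs a factor 4. *)
Lemma wt_avg_drop (x y : int) :
  (2 <= x /\ y <= 0) \/ (x <= -2 /\ 0 <= y) ->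
  (wt x + 2 * (wt ((x + y + 1) %/ 2)%Z + wt ((x + y) %/ 2)%Z) <= 2 * (wt x + wt y))%N.
Proof.
move=> xy; set z := maxn (absz x) (absz y).
have z2 : (2 <= z)%N by rewrite /z; lia.
have hp : (absz ((x + y + 1) %/ 2)%Z <= z.-1)%N by rewrite /z; lia.
have hq : (absz ((x + y) %/ 2)%Z <= z.-1)%N by rewrite /z; lia.
have gp := leq_wexp hp; have gq := leq_wexp hq.
have gs : (4 * wexp z.-1 <= wexp z)%N by have := wexpS z.-1; rewrite prednK // ltnW.
have gz : (wexp z <= wt x + wt y)%N.
  by rewrite /wt /z; case: (leqP (absz x) (absz y)) => h; [rewrite leq_addl|rewrite leq_addr].
rewrite /wt in gz *; lia.
Qed.

Lemma sum_update2 (V : comPzRingType) n (f g : 'I_n -> V) (u v : 'I_n) : u != v ->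
  (forall i, i != u -> i != v -> g i = f i) ->
  \sum_i g i = \sum_i f i + (g u - f u) + (g v - f v).
Proof.
move=> uv fg.
rewrite (bigD1 u) // [in RHS](bigD1 u) //= (bigD1 v) 1?eq_sym //.
rewrite [in RHS](bigD1 v) 1?eq_sym //= (eq_bigr f) => [|i /andP[iu iv]]; last exact: fg.
set S := \sum_(i | _) f i; ring.
Qed.

Section Step.
Variable n : nat.
Implicit Types (x : loadv n) (p : pairn n).

Lemma step_other x p i : i != p.1 -> i != p.2 -> step x p i = x i.
Proof. by rewrite /step => /negPf -> /negPf ->. Qed.

Lemma step_fst x p : step x p p.1 = ((x p.1 + x p.2 + 1) %/ 2)%Z.
Proof. by rewrite /step eqxx. Qed.

Lemma step_snd x p : p.1 != p.2 -> step x p p.2 = ((x p.1 + x p.2) %/ 2)%Z.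
Proof. by rewrite /step eq_sym => /negPf ->; rewrite eqxx. Qed.

Lemma sum_step x p : p.1 != p.2 -> \sum_i step x p i = \sum_i x i.
Proof.
move=> p12; rewrite (sum_update2 p12 (f := x)) => [|i]; last exact: step_other.
rewrite step_fst step_snd //; move: (\sum_i x i) (x p.1) (x p.2) => S a b; lia.
Qed.

Lemma avg_step (R : numFieldType) x p : p.1 != p.2 -> avg R (step x p) = avg R x.
Proof. by move=> p12; rewrite /avg sum_step. Qed.

End Step.

Lemma roundR_avg_bounds (R : archiRealFieldType) n (S : int) : (0 < n)%N ->
  let r := roundR (S%:~R / n%:R : R) in
  2 * n%:Z * r <= 2 * S + n%:Z /\ 2 * S + n%:Z < 2 * n%:Z * r + 2 * n%:Z.
Proof.
move=> n0 r.
have r_le : (r%:~R : R) <= S%:~R / n%:R + 2^-1 by apply: floor_le.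
have r_gt : S%:~R / n%:R + 2^-1 < ((r + 1)%:~R : R).
  by rewrite -floor_lt_int /r /roundR ltzD1.
set s := S%:~R / n%:R in r_le r_gt.
have n_gt0 : (0 : R) < n%:R by rewrite ltr0n.
have Ss : (S%:~R : R) = s * n%:R by rewrite /s mulfVK // gt_eqF.
rewrite intrD in r_gt.
split; [rewrite -(ler_int R) | rewrite -(ltr_int R)];
  rewrite !intrD !intrM Ss /= -[((n%:Z)%:~R : R)]/(n%:R); nra.
Qed.

Lemma sum_affine_bool n (a c : int) (b : 'I_n -> bool) :
  \sum_j (a + c * (b j)%:Z) = n%:Z * a + c * (\sum_j (b j : nat))%N%:Z.
Proof.
rewrite big_split /= sumr_const card_ord -mulr_sumr -mulr_natl natz.
by congr (_ + c * _); rewrite (big_morph _ PoszD (erefl _)).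
Qed.

Section Potential.
Variables (R : archiRealFieldType) (n : nat).
Implicit Types (x : loadv n) (p : pairn n).

Definition ravg x : int := roundR (avg R x).

Definition dev x i : int := x i - ravg x.

Definition within (M : nat) x : Prop := forall i, (absz (dev x i) <= M)%N.

Definition Psi x : rat := \sum_i (wt (dev x i))%:R.

Definition delta x p : rat :=
  (wt (dev x p.1))%:R + (wt (dev x p.2))%:R
  - (wt ((dev x p.1 + dev x p.2 + 1) %/ 2)%Z)%:R
  - (wt ((dev x p.1 + dev x p.2) %/ 2)%Z)%:R.

Definition good_pair x p : bool :=
  (2 <= dev x p.1) && (dev x p.2 <= 0) || (dev x p.1 <= -2) && (0 <= dev x p.2).

Lemma ravg_step x p : p.1 != p.2 -> ravg (step x p) = ravg x.
Proof. by move=> p12; rewrite /ravg avg_step. Qed.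

Lemma within_step M x p : p.1 != p.2 -> within M x -> within M (step x p).
Proof.
move=> p12 xM i; rewrite /dev ravg_step //.
have := xM p.1; have := xM p.2; rewrite /dev.
have [->|i1] := eqVneq i p.1.
  by rewrite step_fst; move: (x p.1) (x p.2) (ravg x) => a b r; lia.
have [->|i2] := eqVneq i p.2.
  by rewrite step_snd //; move: (x p.1) (x p.2) (ravg x) => a b r; lia.
by rewrite step_other //; move: (xM i); rewrite /dev.
Qed.

Lemma Psi_ge0 x : 0 <= Psi x.
Proof. exact: sumr_ge0. Qed.

Lemma Psi_step x p : p.1 != p.2 -> Psi (step x p) = Psi x - delta x p.
Proof.
move=> p12; rewrite /Psi /dev ravg_step //.
rewrite (sum_update2 p12 (f := fun i => (wt (x i - ravg x))%:R)) => [|i i1 i2]; last first.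
  by rewrite step_other.
rewrite step_fst step_snd // /delta /dev.
have -> : ((x p.1 + x p.2 + 1) %/ 2)%Z - ravg x
        = ((x p.1 - ravg x + (x p.2 - ravg x) + 1) %/ 2)%Z.
  by move: (x p.1) (x p.2) (ravg x) => a b r; lia.
have -> : ((x p.1 + x p.2) %/ 2)%Z - ravg x = ((x p.1 - ravg x + (x p.2 - ravg x)) %/ 2)%Z.
  by move: (x p.1) (x p.2) (ravg x) => a b r; lia.
ring.
Qed.

Lemma delta_ge0 x p : 0 <= delta x p.
Proof.
rewrite /delta; have := wt_avg (dev x p.1) (dev x p.2).
move: (wt _) (wt _) (wt _) (wt _) => a b c d h.
by rewrite -natrD -addrA -opprD -natrD subr_ge0 ler_nat; lia.
Qed.

Lemma delta_good_pair x p : good_pair x p -> (wt (dev x p.1))%:R <= 2 * delta x p.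
Proof.
move=> /orP xp; have := @wt_avg_drop (dev x p.1) (dev x p.2).
case: xp => [/andP[a b]|/andP[a b]] => [/(_ (or_introl (conj a b)))|/(_ (or_intror (conj a b)))];
  rewrite /delta; move: (wt _) (wt _) (wt _) (wt _) => w1 w2 w3 w4;
  rewrite -(ler_nat rat) !(natrD, natrM); lra.
Qed.

Lemma good_pair_distinct x p : good_pair x p -> p.1 != p.2.
Proof. by rewrite /good_pair; apply: contraTN => /eqP->; apply/negP => /orP[] /andP[]; lia. Qed.

(* Since the rounded average is within 1/2 of the average, the deviations sum
   to something in [-n/2, n/2), so at least a [1/(2(M+1))] fraction of the
   nodes lies (weakly) on each side of [ravg x]. *)
Lemma count_dev_sides M x : (0 < n)%N -> within M x ->
  (n <= 2 * M.+1 * \sum_j nat_of_bool (dev x j <= 0)%R)%N /\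
  (n <= 2 * M.+1 * \sum_j nat_of_bool (0 <= dev x j)%R)%N.
Proof.
move=> n_gt0 xM.
have [lo hi] := roundR_avg_bounds R (\sum_i x i) n_gt0.
have Sdev : \sum_j dev x j = \sum_i x i - n%:Z * ravg x.
  by rewrite /dev sumrB sumr_const card_ord -mulr_natl natz.
have L1 : \sum_j (1 + - (M.+1%:Z) * (nat_of_bool (dev x j <= 0)%R)%:Z) <= \sum_j dev x j.
  by apply: ler_sum => j _; have := xM j; case: (lerP (dev x j) 0) => /=; lia.
have L2 : \sum_j dev x j <= \sum_j (-1 + M.+1%:Z * (nat_of_bool (0 <= dev x j)%R)%:Z).
  by apply: ler_sum => j _; have := xM j; case: (lerP 0 (dev x j)) => /=; lia.
rewrite !sum_affine_bool in L1 L2.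
move: L1 L2 Sdev lo hi; rewrite -[roundR _]/(ravg x).
move: (\sum_j dev x j) (\sum_j _)%N (\sum_j _)%N (\sum_i x i) (ravg x) => D k1 k2 S r.
lia.
Qed.

Definition gain x i : rat := \sum_j (if good_pair x (i, j) then delta x (i, j) else 0).

Lemma gain_ge_partners x i (Q : pred 'I_n) :
  (forall j, Q j -> good_pair x (i, j)) ->
  (wt (dev x i))%:R / 2 * (\sum_j (Q j : nat))%N%:R <= gain x i.
Proof.
move=> QP; rewrite natr_sum mulr_sumr; apply: ler_sum => j _.
case: (boolP (Q j)) => Qj /=; last by rewrite mulr0; case: ifP => // _; apply: delta_ge0.
by rewrite QP // mulr1; have := delta_good_pair (QP j Qj); lra.
Qed.

Lemma wt_dev_le_gain M x i : (0 < n)%N -> within M x ->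
  n%:R * (wt (dev x i))%:R <= 2 * (2 * M.+1)%:R * gain x i.
Proof.
move=> n_gt0 xM; have [k1 k2] := count_dev_sides n_gt0 xM.
have h0 : (0 : rat) <= (wt (dev x i))%:R by [].
suff [Q [QP nQ]] : exists Q : pred 'I_n, (forall j, Q j -> good_pair x (i, j)) /\
    (n%:R * (wt (dev x i))%:R <= 2 * M.+1%:R * (\sum_j (Q j : nat))%N%:R * (wt (dev x i))%:R :> rat).
  have M_ge0 : (0 : rat) <= M.+1%:R by [].
  have := ler_wpM2l M_ge0 (gain_ge_partners QP); rewrite natrM; lra.
have [d2|d2] := boolP (2 <= dev x i).
  exists (fun j => dev x j <= 0); split; first by move=> j dj; rewrite /good_pair d2 dj.
  by apply: ler_wpM2r => //; rewrite -!natrM ler_nat.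
have [d3|d3] := boolP (dev x i <= -2).
  exists (fun j => 0 <= dev x j); split; first by move=> j dj; rewrite /good_pair d3 dj orbT.
  by apply: ler_wpM2r => //; rewrite -!natrM ler_nat.
exists pred0; split=> //.
by rewrite /wt /wexp ifF ?mulr0 //; apply/negbTE; lia.
Qed.

End Potential.

Definition distinct_pair n (p : pairn n) : bool := p.1 != p.2.

Lemma nchoices_pairs_le n : nchoices (@distinct_pair n) <= (n * n)%:R.
Proof.
apply: le_trans (_ : \sum_(p : pairn n) 1 <= _).
  by rewrite [X in _ <= X](bigID (@distinct_pair n)) /= lerDl sumr_ge0.
by rewrite sumr_const card_prod card_ord.
Qed.

Definition rho n (M : nat) : rat := 1 - ((n * (4 * M.+1))%:R)^-1.

Lemma rho_ge0 n M : (0 < n)%N -> 0 <= rho n M.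
Proof. by move=> n_gt0; rewrite subr_ge0 invf_le1 ?ltr0n ?ler1n; lia. Qed.

Section Drift.
Variables (R : archiRealFieldType) (n M : nat).
Hypothesis n_gt0 : (0 < n)%N.
Implicit Types x : loadv n.

Lemma Psi_le_sum_delta x : within R M x ->
  n%:R * Psi R x <= 2 * (2 * M.+1)%:R * \sum_(p | distinct_pair p) delta R x p.
Proof.
move=> xM; rewrite /Psi mulr_sumr.
apply: le_trans (_ : \sum_i 2 * (2 * M.+1)%:R * gain R x i <= _).
  by apply: ler_sum => i _; apply: wt_dev_le_gain.
rewrite -mulr_sumr; apply: ler_wpM2l; first exact: mulr_ge0.
rewrite /gain pair_big /= [X in _ <= X]big_mkcond /=.
apply: ler_sum => -[i j] _ /=; case: ifP => g.
  by have -> : distinct_pair (i, j) := good_pair_distinct g.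
by case: ifP => // _; apply: delta_ge0.
Qed.

(* The sum over distinct pairs is [nchoices] times the expectation over one
   uniformly random step. *)
Lemma sum_Psi_step_le x : within R M x ->
  \sum_(p | distinct_pair p) Psi R (step x p) <=
  nchoices (@distinct_pair n) * rho n M * Psi R x.
Proof.
move=> xM.
have -> : \sum_(p | distinct_pair p) Psi R (step x p)
        = nchoices (@distinct_pair n) * Psi R x - \sum_(p | distinct_pair p) delta R x p.
  rewrite (eq_bigr (fun p => Psi R x - delta R x p)) => [|p p12]; last exact: Psi_step.
  by rewrite sumrB mulr_suml; congr (_ - _); apply: eq_bigr => *; rewrite mul1r.
have := Psi_le_sum_delta xM; have := nchoices_pairs_le n.
have := nchoices_ge0 (@distinct_pair n); have := Psi_ge0 R x.
move: (\sum_(p | _) _) (nchoices _) (Psi R x) => D Q P P0 Q0 Qn PD.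
have n_pos : (0 : rat) < n%:R by rewrite ltr0n.
have m_pos : (0 : rat) < M.+1%:R by rewrite ltr0n.
rewrite /rho !natrM in PD Qn *.
set N := (n%:R : rat) in PD Qn n_pos *; set m := M.+1%:R in PD m_pos *.
have -> : Q * (1 - (N * (4 * m))^-1) * P = Q * P - (Q * P) / (N * (4 * m)).
  by field; rewrite addrC natr1 !pnatr_eq0 -!lt0n n_gt0.
rewrite lerD2l lerN2 ler_pdivrMr; last by rewrite !mulr_gt0.
have : Q * P <= N * N * P by apply: ler_wpM2r.
have : N * (N * P) <= N * (2 * (2 * m) * D) by apply: ler_wpM2l => //; apply: ltW.
lra.
Qed.

Lemma tsum_Psi_le x L : within R M x ->
  tsum (@distinct_pair n) L (fun s => Psi R (foldl (@step n) x s)) <=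
  (nchoices (@distinct_pair n) * rho n M) ^+ L * Psi R x.
Proof.
elim: L x => [|L IH] x xM; first by rewrite tsum0 expr0 mul1r.
have a_ge0 : 0 <= nchoices (@distinct_pair n) * rho n M.
  by rewrite mulr_ge0 ?nchoices_ge0 ?rho_ge0.
rewrite tsumS /=; apply: le_trans (_ : \sum_(p | distinct_pair p)
    (nchoices (@distinct_pair n) * rho n M) ^+ L * Psi R (step x p) <= _).
  by apply: ler_sum => p p12; apply/IH/within_step.
rewrite -mulr_sumr exprSr -mulrA ler_wpM2l ?exprn_ge0 //.
exact: sum_Psi_step_le.
Qed.

End Drift.

Lemma expr1B_bernoulli (a : rat) k : 0 <= a -> a <= 1 ->
  (1 - a) ^+ k * (1 + k%:R * a) <= 1.
Proof.
move=> a0 a1; elim: k => [|k IH]; first by rewrite expr0 mul0r addr0 mulr1.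
have p0 : 0 <= (1 - a) ^+ k by apply: exprn_ge0; lra.
have k0 : (0 : rat) <= k%:R by [].
have H : (1 - a) * (1 + (k%:R + 1) * a) <= 1 + k%:R * a by nra.
by rewrite exprSr -natr1 -mulrA; apply: le_trans IH; apply: ler_wpM2l.
Qed.

Lemma expr1B_inv_half (m : nat) : (0 < m)%N -> (1 - (m%:R : rat)^-1) ^+ m <= 2^-1.
Proof.
move=> m0; have m_pos : (0 : rat) < m%:R by rewrite ltr0n.
have := @expr1B_bernoulli (m%:R^-1) m; rewrite invr_ge0 invf_le1 ?ler1n // ltW //.
rewrite mulfV ?gt_eqF // => /(_ isT m0).
have : 0 <= (1 - (m%:R : rat)^-1) ^+ m by rewrite exprn_ge0 // subr_ge0 invf_le1 ?ler1n.
move: (_ ^+ m) => y; lra.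
Qed.

Definition mix_time n M : nat := 4 * M.+1 * 4 * (n * trunc_log 2 n).

(* [mix_time n M = m * 4 log n] with [m = 4 n (M+1)], and [rho n M ^+ m <= 1/2],
   so the power is at most [2 ^ (-4 log n) <= n^-2]. *)
Lemma rho_expn_le n M : (2 <= n)%N -> rho n M ^+ mix_time n M * (n * n)%:R <= 1.
Proof.
move=> n2; rewrite /mix_time; set m := (n * (4 * M.+1))%N; set k := trunc_log 2 n.
have -> : (4 * M.+1 * 4 * (n * k) = m * (4 * k))%N by rewrite /m; nia.
have rho0 : 0 <= rho n M by apply: rho_ge0; lia.
have rho_half : rho n M ^+ m ^+ (4 * k) <= 2^-1 ^+ (4 * k).
  by rewrite lerXn2r ?nnegrE ?exprn_ge0 // expr1B_inv_half // /m; lia.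
have nn : ((n * n)%:R : rat) <= 2 ^+ (4 * k).
  rewrite -natrX ler_nat; apply: leq_trans (_ : 2 ^ k.+1 * 2 ^ k.+1 <= _)%N.
    by apply: leq_mul; apply/ltnW/trunc_log_ltn.
  by rewrite -expnD leq_exp2l //; have := trunc_log_gt0 2 n; lia.
rewrite exprM; apply: le_trans (_ : 2^-1 ^+ (4 * k) * 2 ^+ (4 * k) <= 1).
  apply: le_trans (ler_wpM2l (exprn_ge0 _ (exprn_ge0 _ rho0)) nn) _.
  by apply: ler_wpM2r => //; apply: exprn_ge0.
by rewrite -exprMn mulVf // expr1n.
Qed.

Section Markov.
Variables (R : archiRealFieldType) (n M : nat).
Implicit Types x : loadv n.

Lemma Psi_ge1 x : ~~ cond3 R x -> 1 <= Psi R x.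
Proof.
rewrite /cond3 negb_forall => /existsP[i xi]; rewrite /Psi (bigD1 i) //=.
have : (1 <= wt (dev R x i))%N.
  rewrite /wt /wexp /dev /ravg ifT ?expn_gt0 //.
  by move: xi; move: (x i) (roundR _) => a b; lia.
by rewrite -(ler_nat rat) => w1; rewrite -[1]addr0 lerD // sumr_ge0.
Qed.

Lemma Psi_le x : within R M x -> Psi R x <= (n * 4 ^ M)%:R.
Proof.
move=> xM; apply: le_trans (_ : \sum_(i < n) (4 ^ M)%N%:R <= _).
  apply: ler_sum => i _; rewrite ler_nat; apply: leq_trans (leq_wexp (xM i)) _.
  by rewrite /wexp; case: ifP.
by rewrite sumr_const card_ord natrM mulr_natl.
Qed.

(* Markov's inequality for [Psi], using [Psi_ge1]. *)
Lemma tsum_not_cond3_le x : (2 <= n)%N -> within R M x ->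
  tsum (@distinct_pair n) (mix_time n M) (fun s => (~~ cond3 R (foldl (@step n) x s) : nat)%:R)
  <= nchoices (@distinct_pair n) ^+ mix_time n M * (4 ^ M)%N%:R / n%:R.
Proof.
move=> n2 xM; have n_gt0 : (0 < n)%N by lia.
apply: le_trans (_ : tsum _ _ (fun s => Psi R (foldl (@step n) x s)) <= _).
  apply: ler_tsum => s _ _; case: (boolP (~~ cond3 R _)) => [/Psi_ge1 //|_].
  exact: Psi_ge0.
apply: le_trans (tsum_Psi_le _ _ xM) _ => //.
have rho_n2 := rho_expn_le M n2.
have PM := Psi_le xM; have P0 := Psi_ge0 R x.
have Q0 : 0 <= nchoices (@distinct_pair n) ^+ mix_time n M.
  by rewrite exprn_ge0 ?nchoices_ge0.
have r0 : 0 <= rho n M ^+ mix_time n M by rewrite exprn_ge0 ?rho_ge0.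
rewrite exprMn -!mulrA; apply: ler_wpM2l => //.
have K0 : (0 : rat) <= (4 ^ M)%N%:R by [].
rewrite ler_pdivlMr ?ltr0n //; move: rho_n2 PM; rewrite !natrM.
move: (rho n M ^+ _) r0 ((4 ^ M)%N%:R) K0 (Psi R x) P0 => y y0 K K0 P P0 yn PK.
have := ler_wpM2l (mulr_ge0 y0 (ler0n _ n)) PK; have := ler_wpM2r K0 yn.
lra.
Qed.

Lemma tsum_not_cond3_ext_le x r : (2 <= n)%N -> within R M x ->
  tsum (@distinct_pair n) (mix_time n M + r)
       (fun s => (~~ cond3 R (foldl (@step n) x (take (mix_time n M) s)) : nat)%:R)
  <= (4 ^ M)%N%:R / n%:R * tsum (@distinct_pair n) (mix_time n M + r) (fun _ => 1).
Proof.
move=> n2 xM; rewrite !(tsum_cat _ (mix_time n M) r).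
under eq_tsum => s1 s1D _ do
  (under eq_tsum => s2 _ _ do rewrite take_size_cat //; rewrite tsum_const).
rewrite tsumZ (tsum_const _ r) mulr1 tsum_const.
have Qr := exprn_ge0 r (nchoices_ge0 (@distinct_pair n)).
apply: le_trans (ler_wpM2l Qr (tsum_not_cond3_le n2 xM)) _.
by rewrite le_eqVlt; apply/orP; left; apply/eqP; ring.
Qed.

End Markov.

Lemma within_of_cond2 (R : archiRealFieldType) (c : R) n (x : loadv n) :
  cond2 c x -> within R (Num.truncn (2 * c + 1)) x.
Proof.
move=> /forallP x2 i; have /andP[hi lo] := x2 i.
set T := Num.truncn (2 * c + 1).
have hT : 2 * c + 1 < T.+1%:R := truncnS_gt _.
have r_le : ((ravg R x)%:~R : R) <= avg R x + 2^-1 by apply: floor_le.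
have r_gt : avg R x + 2^-1 < ((ravg R x + 1)%:~R : R).
  by rewrite -floor_lt_int /ravg /roundR ltzD1.
rewrite intrD in r_gt.
have up : ((dev R x i)%:~R : R) < (T.+1%:Z)%:~R.
  by rewrite intrB -[(T.+1%:Z)%:~R]/(T.+1%:R); lra.
have dn : ((- T.+1%:Z)%:~R : R) < (dev R x i)%:~R.
  by rewrite intrB intrN -[(T.+1%:Z)%:~R]/(T.+1%:R); lra.
rewrite ltr_int in up; rewrite ltr_int in dn; lia.
Qed.

Lemma card_valid_tsum n L (E : pred (seq (pairn n))) :
  #|[set s : L.-tuple (pairn n) | valid s && E s]|%:R
  = tsum (@distinct_pair n) L (fun s => (E s : nat)%:R).
Proof.
rewrite -sum1_card natr_sum /tsum big_mkcond [RHS]big_mkcond /=.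
apply: eq_bigr => s _; rewrite inE -[valid s]/(all (@distinct_pair n) s).
by case: (all _ s); case: (E s).
Qed.

Lemma prob_tsum n L (E : pred (seq (pairn n))) :
  prob L E = tsum (@distinct_pair n) L (fun s => (E s : nat)%:R)
           / tsum (@distinct_pair n) L (fun _ => 1).
Proof.
rewrite /prob card_valid_tsum -(card_valid_tsum L xpredT).
by congr (_ / _%:R); apply: eq_card => s; rewrite !inE andbT.
Qed.

Section FirstTimes.
Variables (R : numFieldType) (c : R) (n : nat) (l0 : loadv n).

Lemma first_from_congr (P P' : nat -> bool) a t :
  (forall u, (u <= t)%N -> P u = P' u) -> first_from P a t = first_from P' a t.
Proof.
move=> PP'; rewrite /first_from PP' //; congr [&& _, _ & _].
by apply: eq_forallb => j; rewrite PP' // ltnW.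
Qed.

Lemma first_from_uniq P a t t' : first_from P a t -> first_from P a t' -> t = t'.
Proof.
move=> /and3P[a1 p1 f1] /and3P[a2 p2 f2].
case: (ltngtP t t') => // h.
  by move/forallP: f2 => /(_ (Ordinal h)) /=; rewrite a1 p1.
by move/forallP: f1 => /(_ (Ordinal h)) /=; rewrite a2 p2.
Qed.

Lemma traj_cat_prefix s1 s2 u : (u <= size s1)%N -> traj l0 (s1 ++ s2) u = traj l0 s1 u.
Proof.
move=> u_le; rewrite /traj take_cat; case: ltnP => // u_ge.
have -> : u = size s1 by lia.
by rewrite subnn take0 cats0 take_size.
Qed.

Lemma traj_cat s1 s2 k :
  traj l0 (s1 ++ s2) (size s1 + k) = foldl (@step n) (foldl (@step n) l0 s1) (take k s2).
Proof. by rewrite /traj take_cat ltnNge leq_addr /= addKn foldl_cat. Qed.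

Lemma isT2_cat s1 s2 : isT2 c l0 (s1 ++ s2) (size s1) = isT2 c l0 s1 (size s1).
Proof.
apply: eq_existsb => t1; have t1_le : (t1 <= size s1)%N by rewrite -ltnS.
congr andb; apply: first_from_congr => u u_le; rewrite traj_cat_prefix //.
exact: leq_trans t1_le.
Qed.

Lemma cond2_of_isT2 s t : isT2 c l0 s t -> cond2 c (traj l0 s t).
Proof. by move=> /existsP[t1 /andP[_ /and3P[_ ]]]. Qed.

Lemma isT2_uniq s t t' : isT2 c l0 s t -> isT2 c l0 s t' -> t = t'.
Proof.
move=> /existsP[t1 /andP[h1 h2]] /existsP[t1' /andP[h1' h2']].
by move: h2; rewrite (first_from_uniq h1 h1') => /first_from_uniq; apply.
Qed.

Lemma sum_isT2_le1 N s : \sum_(t < N.+1) ((isT2 c l0 s t : nat)%:R : rat) <= 1.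
Proof.
have [/existsP[t st]|] := boolP [exists t : 'I_N.+1, isT2 c l0 s t].
  rewrite (bigD1 t) //= st big1 ?addr0 // => t' t't.
  case: (boolP (isT2 c l0 s t')) => // st'.
  by move/eqP: t't; case; apply: val_inj; apply: isT2_uniq st' st.
by rewrite negb_exists => /forallP none; rewrite big1 // => t _; rewrite (negbTE (none t)).
Qed.

End FirstTimes.

Section BadEvent.
Variables (R : archiRealFieldType) (c : R) (n : nat) (l0 : loadv n) (N : nat).
Hypothesis n2 : (2 <= n)%N.

Let M := Num.truncn (2 * c + 1).
Let D := mix_time n M.

(* Conditioning on the prefix of length [t2]: once [cond2] holds at time [t2],
   the loads stay within [M] of the rounded average and the Markov bound
   applies to the next [D] steps. *)
Lemma tsum_T2_not_cond3_le t2 : (t2 <= N)%N ->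
  tsum (@distinct_pair n) (N + D)
    (fun s => (isT2 c l0 s t2 : nat)%:R * (~~ cond3 R (traj l0 s (t2 + D)) : nat)%:R)
  <= (4 ^ M)%N%:R / n%:R * tsum (@distinct_pair n) (N + D) (fun s => (isT2 c l0 s t2 : nat)%:R).
Proof.
move=> t2N; have -> : (N + D = t2 + (D + (N - t2)))%N by lia.
rewrite !(tsum_cat _ t2 (D + (N - t2))) -tsumZ; apply: ler_tsum => s1 <- _.
under eq_tsum => s2 _ _ do rewrite isT2_cat traj_cat.
under [X in _ <= _ * X]eq_tsum => s2 _ _ do rewrite isT2_cat.
rewrite tsumZ tsum_const.
have [T2|_] := boolP (isT2 c l0 s1 (size s1)); last by rewrite !mul0r !mulr0.
rewrite mul1r -tsum_const; apply: tsum_not_cond3_ext_le => //.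
by apply: within_of_cond2; have := cond2_of_isT2 T2; rewrite /traj take_size.
Qed.

Lemma bad_le_sum_T2 s : ((bad c l0 N D s : nat)%:R : rat) <=
  \sum_(t2 < N.+1) (isT2 c l0 s t2 : nat)%:R * (~~ cond3 R (traj l0 s (t2 + D)) : nat)%:R.
Proof.
have [/existsP[t /andP[T2 /forallP none3]]|_] := boolP (bad c l0 N D s); last first.
  by apply: sumr_ge0 => t _; apply: mulr_ge0.
rewrite (bigD1 t) //= T2 (none3 ord_max) mulr1 lerDl.
by apply: sumr_ge0 => t' _; apply: mulr_ge0.
Qed.

Lemma prob_bad_le : prob (N + D) (bad c l0 N D) <= (4 ^ M)%N%:R / n%:R.
Proof.
set K := (4 ^ M)%N%:R / n%:R; rewrite prob_tsum.
have key : tsum (@distinct_pair n) (N + D) (fun s => (bad c l0 N D s : nat)%:R) <=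
           K * tsum (@distinct_pair n) (N + D) (fun _ => 1).
  apply: le_trans (ler_tsum (fun s _ _ => bad_le_sum_T2 s)) _.
  rewrite tsum_sum; apply: le_trans (_ : \sum_(t2 < N.+1) K *
      tsum (@distinct_pair n) (N + D) (fun s => (isT2 c l0 s t2 : nat)%:R) <= _).
    by apply: ler_sum => t2 _; apply: tsum_T2_not_cond3_le; rewrite -ltnS.
  rewrite -mulr_sumr -tsum_sum; apply: ler_wpM2l; first exact: divr_ge0.
  by apply: ler_tsum => s _ _; apply: sum_isT2_le1.
move: key; set Z := tsum _ _ (fun _ => 1) => key.
have [->|Z0] := eqVneq Z 0; first by rewrite invr0 mulr0 divr_ge0.
rewrite ler_pdivrMr // lt_def Z0 /Z tsum_const mulr1.
by rewrite exprn_ge0 ?nchoices_ge0.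
Qed.

End BadEvent.

Theorem lemma5 (R : archiRealFieldType) (c : R) :
  10 <= c ->
  exists C K : nat,
    forall (n : nat) (l0 : loadv n) (N : nat),
      (2 <= n)%N ->
      let D := (C * (n * trunc_log 2 n))%N in
      prob (N + D) (bad c l0 N D) <= K%:R / n%:R.
Proof.
(* The bound holds for every [c]; only [M], which bounds the deviations from
   the rounded average once [cond2] holds, depends on it. *)
move=> _; set M := Num.truncn (2 * c + 1).
exists (4 * M.+1 * 4)%N, (4 ^ M)%N => n l0 N n2.
exact: prob_bad_le.
Qed.
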